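(* Assume the setup of the context with $F$ formally real, and fix a $\ast$-symmetric basis $B$ of $H$. Let $\rho:H\to K^{d\times d}$ be an irreducible matrix representation of isomorphism type $\lambda\in\Lambda$. (a) Suppose there is $\Omega\in\mathcal{O}^{d\times d}$ with $\Omega\rho(x)=\rho(x^\ast)^T\Omega$ for all $x\in B$ such that $\Omega+\mathfrak{m}^{d\times d}$ is an invertible diagonal matrix $\mathrm{diag}(d_1,\dots,d_d)\in GL_d(F)$. Then $a_\lambda\in\Gamma$ and $\rho$ is balanced; moreover, for any $v^{a_\lambda}\in K$ with $\nu(v^{a_\lambda})=a_\lambda$, the matrices $c(x):=v^{a_\lambda}\rho(x)\bmod\mathfrak{m}\in F^{d\times d}$ satisfy $d_{\mathfrak t}\,c(x^\ast)_{\mathfrak{ts}}=d_{\mathfrak s}\,c(x)_{\mathfrak{st}}$ for all $x\in B$ and all $\mathfrak s,\mathfrak t$. (b) Suppose there is a symmetric $\Omega\in GL_d(\mathcal{O})$ with $\Omega\rho(x)=\rho(x^\ast)^T\Omega$ for all $x\in B$. Then $a_\lambda\in\Gamma$ and $\rho$ is balanced.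
   Context: Setup: $\Gamma$ a totally ordered abelian group; $K$ a field with surjective valuation $\nu:K\to\Gamma\cup\{\infty\}$, valuation ring $\mathcal{O}$, maximal ideal $\mathfrak{m}$, residue field $F=\mathcal{O}/\mathfrak{m}$; $\nu$ of a matrix is the minimum of the valuations of its entries. $F$ formally real means $-1$ is not a sum of squares in $F$. $H$ is a finite-dimensional split semisimple $K$-algebra which is symmetric with respect to a $K$-linear trace form $\tau:H\to K$ ($\tau(ab)=\tau(ba)$, $(a,b)\mapsto\tau(ab)$ nondegenerate). $\Lambda$ indexes the simple $H$-modules, $\chi_\lambda$ is the character of type $\lambda$, and the Schur elements $c_\lambda\in K^\times$ are defined by $\tau=\sum_{\lambda\in\Lambda}c_\lambda^{-1}\chi_\lambda$. $\ast:H\to H$ is a $K$-linear antiautomorphism with $h^{\ast\ast}=h$. A $\ast$-symmetric basis is a $K$-basis $B$ of $H$ with $B^\ast=B$ and $\tau(bc^\ast)=\delta_{bc}$ for all $b,c\in B$; one is assumed to exist. Put $a_\lambda:=-\tfrac12\nu(c_\lambda)\in\tfrac12\Gamma$. An irreducible matrix representation $\rho:H\to K^{d\times d}$ of type $\lambda$ is called balanced if $a_\lambda\in\Gamma$ and $\nu(\rho(b))\ge-a_\lambda$ for all $b\in B'$, for every $\ast$-symmetric basis $B'$ of $H$. *)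

From HB Require Import structures.
From mathcomp Require Import all_boot all_order all_algebra all_field.
Set Implicit Arguments. Unset Strict Implicit. Unset Printing Implicit Defensive.
Import Order.TTheory GRing.Theory Num.Theory.
Local Open Scope ring_scope.

Definition totally_ordered_group (G : porderZmodType) :=
  (forall x y : G, (x <= y) || (y <= x)) /\
  (forall x y z : G, x <= y -> x + z <= y + z).

(* A valuation nu : K -> Gamma u {oo} is encoded by v : K -> Gamma, the value of
   nu on nonzero elements (nu 0 = oo; the value v 0 is irrelevant). *)
Definition surj_valuation (K : fieldType) (G : porderZmodType) (v : K -> G) :=
  [/\ forall x y : K, x != 0 -> y != 0 -> v (x * y) = v x + v y,
      forall x y : K, x != 0 -> y != 0 -> x + y != 0 ->
        (v x <= v (x + y)) || (v y <= v (x + y))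
    & forall g : G, exists2 x : K, x != 0 & v x = g].

Section Val.
Variables (K : fieldType) (G : porderZmodType) (v : K -> G).
Definition vge (x : K) (g : G) : bool := (x == 0) || (g <= v x).
Definition inO (x : K) : bool := vge x 0.
Definition inm (x : K) : bool := (x == 0) || (0 < v x).
Definition inOunit (x : K) : bool := (x != 0) && (v x == 0).
Definition vge_mx m n (M : 'M[K]_(m, n)) (g : G) : Prop :=
  forall i j, vge (M i j) g.
(* residue field F = O/m is formally real: -1 is not a sum of squares in F,
   i.e. for no x_1..x_k in O is 1 + sum x_i^2 in m. *)
Definition residue_formally_real : Prop :=
  forall k (x : 'I_k -> K), (forall i, inO (x i)) ->
    ~~ inm (1 + \sum_(i < k) x i ^+ 2).
End Val.

Section Alg.
Variables (K : fieldType) (H : falgType K).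

Definition symm_trace_form (tau : H -> K) :=
  [/\ forall (a : K) (x y : H), tau (a *: x + y) = a * tau x + tau y,
      forall x y : H, tau (x * y) = tau (y * x)
    & forall x : H, (forall y : H, tau (x * y) = 0) -> x = 0].

Definition involutive_antiaut (star : H -> H) :=
  [/\ forall (a : K) (x y : H), star (a *: x + y) = a *: star x + star y,
      forall x y : H, star (x * y) = star y * star x
    & forall x : H, star (star x) = x].

Definition star_sym_basis (tau : H -> K) (star : H -> H) (B : seq H) :=
  [/\ basis_of fullv B,
      forall b : H, (star b \in B) = (b \in B)
    & forall b c, b \in B -> c \in B -> tau (b * star c) = (b == c)%:R].

Definition mx_rep d (rho : H -> 'M[K]_d) :=
  [/\ forall (a : K) (x y : H), rho (a *: x + y) = a *: rho x + rho y,
      forall x y : H, rho (x * y) = rho x *m rho y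
    & rho 1 = 1%:M].

(* H is split semisimple, with simple modules indexed by L: the representations
   r l : H -> K^{n l x n l} induce an isomorphism H ~= prod_l M_{n l}(K). *)
Definition split_semisimple (L : finType) (n : L -> nat)
    (r : forall l : L, H -> 'M[K]_(n l)) :=
  [/\ forall l, (0 < n l)%N,
      forall l, mx_rep (r l),
      forall x : H, (forall l, r l x = 0) -> x = 0
    & forall M : (forall l : L, 'M[K]_(n l)), exists x : H, forall l, r l x = M l].

Definition chi (L : finType) (n : L -> nat) (r : forall l : L, H -> 'M[K]_(n l))
  (l : L) (x : H) : K := \tr (r l x).

Definition schur_elements (L : finType) (n : L -> nat)
    (r : forall l : L, H -> 'M[K]_(n l)) (tau : H -> K) (c : L -> K) :=
  (forall l, c l != 0) /\
  (forall x : H, tau x = \sum_(l : L) (c l)^-1 * chi r l x).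

(* rho is an irreducible matrix representation of type l: it is a matrix
   representation isomorphic (by an invertible change of basis) to r l. *)
Definition irr_rep_of_type (L : finType) (n : L -> nat)
    (r : forall l : L, H -> 'M[K]_(n l)) (l : L) d (rho : H -> 'M[K]_d) :=
  mx_rep rho /\
  exists P : 'M[K]_(d, n l), exists Q : 'M[K]_(n l, d),
    [/\ P *m Q = 1%:M, Q *m P = 1%:M & forall x : H, rho x = P *m r l x *m Q].

(* rho (of type with Schur element cl) is balanced: a := -1/2 nu(cl) lies in
   Gamma (i.e. nu(cl) = -2a) and nu(rho b) >= -a for all b in every
   *-symmetric basis. *)
Definition balanced (G : porderZmodType) (v : K -> G) (tau : H -> K)
    (star : H -> H) (cl : K) d (rho : H -> 'M[K]_d) :=
  exists a : G, v cl = - (a *+ 2) /\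
    forall B' : seq H, star_sym_basis tau star B' ->
      forall b, b \in B' -> vge_mx v (rho b) (- a).
End Alg.

From HB Require Import structures.
From mathcomp Require Import all_boot all_order all_algebra all_field.
From mathcomp Require Import ring.
Import Order.TTheory GRing.Theory Num.Theory.
Local Open Scope ring_scope.

Set Implicit Arguments. Unset Strict Implicit. Unset Printing Implicit Defensive.

(* Over a *-symmetric basis X the Schur relation
   c_l M = sum_(b in X) tr(M rho(star b)) rho(b) gives, entrywise,
   c_l = sum_b rho(star b)_qp rho(b)_pq.  If m is the least valuation of an entry
   of the rho(b), b in X, this forces nu(c_l) >= 2m.  Conversely, let rho(b0)_pq
   have valuation m.  In (a) the relation Om rho(b) = rho(star b)^T Om gives
   rho(star b)_qp Om_qq = Om_pp rho(b)_pq up to terms of valuation > m, and in (b)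
   the choice M = Om^-1 E_pq Om turns every trace into rho(b)_pq.  Either way c_l
   times a unit, resp. an integral element, is the sum of squares
   sum_b rho(b)_pq^2, whose valuation is exactly 2m because the residue field is
   formally real.  Hence nu(c_l) = 2m for every *-symmetric basis, which is
   balancedness, and (a) read modulo the maximal ideal is the residue identity. *)

Lemma lincomb_morph (K : fieldType) (V W : lmodType K) (f : V -> W) :
    (forall a x y, f (a *: x + y) = a *: f x + f y) ->
  forall (I : Type) (s : seq I) (a : I -> K) (x : I -> V),
  f (\sum_(i <- s) a i *: x i) = \sum_(i <- s) a i *: f (x i).
Proof.
move=> f_lin I s a x.
have f0 : f 0 = 0.
  by have := f_lin 1 0 0; rewrite scaler0 addr0 scale1r -{1}[f 0]addr0 => /addrI.
by elim: s => [|i s IH]; rewrite ?big_nil ?big_cons ?f_lin ?IH.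
Qed.

Section DeltaMatrix.
Variables (R : pzRingType) (d : nat).
Implicit Types (p q : 'I_d) (A B : 'M[R]_d).

Lemma mxtrace_delta_mul p q A : \tr (delta_mx p q *m A) = A q p.
Proof.
rewrite /mxtrace (bigD1 p) //= big1 ?addr0 => [|k kp].
  rewrite mxE (bigD1 q) //= big1 ?addr0 => [|j jq]; first by rewrite mxE !eqxx mul1r.
  by rewrite mxE (negbTE jq) andbF mul0r.
by rewrite mxE big1 // => j _; rewrite mxE (negbTE kp) mul0r.
Qed.

Lemma mulmx_delta_entry p q A B i j : (A *m delta_mx p q *m B) i j = A i p * B q j.
Proof.
rewrite mxE (bigD1 q) //= big1 ?addr0 => [|k kq].
  rewrite mxE (bigD1 p) //= big1 ?addr0 => [|k kp]; first by rewrite mxE !eqxx mulr1.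
  by rewrite mxE (negbTE kp) mulr0.
by rewrite mxE big1 ?mul0r // => k' _; rewrite mxE (negbTE kq) andbF mulr0.
Qed.

End DeltaMatrix.

Section Balanced.

Variables (G : porderZmodType) (hG : totally_ordered_group G).
Implicit Types g h m : G.

Lemma le_total_og g h : (g <= h) || (h <= g).
Proof. by case: hG. Qed.

Lemma leD2r_og g h m : g <= h -> g + m <= h + m.
Proof. by case: hG => _; apply. Qed.

Lemma leD_og g h g' h' : g <= h -> g' <= h' -> g + g' <= h + h'.
Proof.
move=> le_gh le_gh'; apply: le_trans (leD2r_og g' le_gh) _.
by rewrite ![h + _]addrC leD2r_og.
Qed.

Lemma ltleD_og g h g' h' : g < h -> g' <= h' -> g + g' < h + h'.
Proof.
move=> lt_gh le_gh'; apply: (@lt_le_trans _ _ (h + g')); last first.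
  by rewrite ![h + _]addrC leD2r_og.
move: lt_gh; rewrite !lt_def => /andP[ne_hg le_gh].
by rewrite leD2r_og // andbT; apply: contra ne_hg => /eqP/addIr->.
Qed.

Lemma leNgt_og g h : (g <= h) = ~~ (h < g).
Proof. exact: comparable_leNgt (le_total_og g h). Qed.

Lemma double_inj_og g h : g + g = h + h -> g = h.
Proof.
move=> ghE; apply/eqP; rewrite -subr_eq0; set k := g - h.
have kk : k + k = 0 by rewrite /k addrACA ghE -opprD subrr.
rewrite eq_le; have [le_k0|le_0k] := orP (le_total_og k 0).
  by have := leD2r_og k le_k0; rewrite kk add0r => ->; rewrite le_k0.
by have := leD2r_og k le_0k; rewrite kk add0r => ->; rewrite le_0k.
Qed.

Lemma seq_min_og (s : seq G) g0 : g0 \in s -> exists2 g, g \in s & forall h, h \in s -> g <= h.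
Proof.
case: s => // g1 s _; elim: s g1 => [|g2 s IH] g1.
  by exists g1; rewrite ?mem_head // => h; rewrite mem_seq1 => /eqP->.
have [g s_g min_g] := IH g2; have [le_g1g|le_gg1] := orP (le_total_og g1 g).
  exists g1 => [|h]; first exact: mem_head.
  by rewrite inE => /orP[/eqP->//|/min_g]; apply: le_trans.
exists g => [|h]; first by rewrite inE s_g orbT.
by rewrite inE => /orP[/eqP->//|/min_g].
Qed.

Variables (K : fieldType) (v : K -> G) (hv : surj_valuation v).
Implicit Types x y : K.

Definition vgt x g : bool := (x == 0) || (g < v x).

Lemma vM x y : x != 0 -> y != 0 -> v (x * y) = v x + v y.
Proof. by case: hv => vM _ _; apply: vM. Qed.

Lemma v1 : v 1 = 0.
Proof. by apply: (@addrI _ (v 1)); rewrite -vM ?oner_neq0 // mulr1 addr0. Qed.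

Lemma vV x : x != 0 -> v x^-1 = - v x.
Proof.
by move=> x0; apply: (@addrI _ (v x)); rewrite -vM ?invr_eq0 // mulfV // v1 subrr.
Qed.

Lemma vN x : x != 0 -> v (- x) = v x.
Proof.
have vN1 : v (-1) = 0.
  by apply: double_inj_og; rewrite -vM ?oppr_eq0 ?oner_neq0 // mulrNN mulr1 v1 addr0.
by move=> x0; rewrite -mulN1r vM ?oppr_eq0 ?oner_neq0 // vN1 add0r.
Qed.

Lemma vge0 g : vge v 0 g. Proof. by rewrite /vge eqxx. Qed.
Lemma vgt0 g : vgt 0 g. Proof. by rewrite /vgt eqxx. Qed.
Lemma vge_val x : vge v x (v x). Proof. by rewrite /vge lexx orbT. Qed.

Lemma vgt_vge x g : vgt x g -> vge v x g.
Proof. by rewrite /vgt /vge => /orP[->|/ltW->]; rewrite ?orbT. Qed.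

Lemma vgeN x g : vge v x g -> vge v (- x) g.
Proof. by rewrite /vge oppr_eq0; have [//|x0] := eqVneq x 0; rewrite /= vN. Qed.

Lemma vgtN x g : vgt x g -> vgt (- x) g.
Proof. by rewrite /vgt oppr_eq0; have [//|x0] := eqVneq x 0; rewrite /= vN. Qed.

Lemma v_ultrametric x y : x != 0 -> y != 0 -> x + y != 0 ->
  (v x <= v (x + y)) || (v y <= v (x + y)).
Proof. by case: hv => _ ultra _; apply: ultra. Qed.

Lemma vgeD x y g : vge v x g -> vge v y g -> vge v (x + y) g.
Proof.
have [->|x0] := eqVneq x 0; first by rewrite add0r.
have [->|y0] := eqVneq y 0; first by rewrite addr0.
rewrite /vge (negbTE x0) (negbTE y0) /=; have [//|s0 /= le_gx le_gy] := eqVneq (x + y) 0.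
by case/orP: (v_ultrametric x0 y0 s0); [apply: le_trans le_gx | apply: le_trans le_gy].
Qed.

Lemma vgtD x y g : vgt x g -> vgt y g -> vgt (x + y) g.
Proof.
have [->|x0] := eqVneq x 0; first by rewrite add0r.
have [->|y0] := eqVneq y 0; first by rewrite addr0.
rewrite /vgt (negbTE x0) (negbTE y0) /=; have [//|s0 /= lt_gx lt_gy] := eqVneq (x + y) 0.
by case/orP: (v_ultrametric x0 y0 s0); [apply: lt_le_trans lt_gx | apply: lt_le_trans lt_gy].
Qed.

Lemma vgeB x y g : vge v x g -> vge v y g -> vge v (x - y) g.
Proof. by move=> vx vy; rewrite vgeD ?vgeN. Qed.

Lemma vgtB x y g : vgt x g -> vgt y g -> vgt (x - y) g.
Proof. by move=> vx vy; rewrite vgtD ?vgtN. Qed.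

Lemma vgeM x y g h : vge v x g -> vge v y h -> vge v (x * y) (g + h).
Proof.
have [->|x0] := eqVneq x 0; first by rewrite mul0r => _ _; apply: vge0.
have [->|y0] := eqVneq y 0; first by rewrite mulr0 => _ _; apply: vge0.
by rewrite /vge mulf_eq0 (negbTE x0) (negbTE y0) /= vM //; apply: leD_og.
Qed.

Lemma vgtM x y g h : vgt x g -> vge v y h -> vgt (x * y) (g + h).
Proof.
have [->|x0] := eqVneq x 0; first by rewrite mul0r => _ _; apply: vgt0.
have [->|y0] := eqVneq y 0; first by rewrite mulr0 => _ _; apply: vgt0.
by rewrite /vgt /vge mulf_eq0 (negbTE x0) (negbTE y0) /= vM //; apply: ltleD_og.
Qed.

Lemma vge_sum (I : Type) (s : seq I) (P : pred I) (F : I -> K) g :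
  (forall i, P i -> vge v (F i) g) -> vge v (\sum_(i <- s | P i) F i) g.
Proof. by move=> vF; elim/big_rec: _ => [|i x Pi vx]; [apply: vge0 | apply: vgeD (vF i Pi) vx]. Qed.

Lemma vgt_sum (I : Type) (s : seq I) (P : pred I) (F : I -> K) g :
  (forall i, P i -> vgt (F i) g) -> vgt (\sum_(i <- s | P i) F i) g.
Proof. by move=> vF; elim/big_rec: _ => [|i x Pi vx]; [apply: vgt0 | apply: vgtD (vF i Pi) vx]. Qed.

Lemma inO1 : inO v 1. Proof. by rewrite /inO /vge v1 lexx orbT. Qed.

Lemma inOM x y : inO v x -> inO v y -> inO v (x * y).
Proof. by move=> Ox Oy; rewrite /inO -[0 : G](add0r 0); apply: vgeM. Qed.

Lemma inO_notm x : inO v x -> ~~ inm v x -> x != 0 /\ v x = 0.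
Proof.
rewrite /inO /inm /vge; have [//|x0 /= le0x] := eqVneq x 0.
by rewrite -leNgt_og => lex0; split=> //; apply: le_anti; rewrite lex0 le0x.
Qed.

Lemma vB_gt x y : x != 0 -> vgt y (v x) -> x - y != 0 /\ v (x - y) = v x.
Proof.
move=> x0 vy; have not_vgt_x : ~~ vgt x (v x) by rewrite /vgt (negbTE x0) ltxx.
have xy0 : x - y != 0.
  by apply: contra not_vgt_x; rewrite subr_eq0 => /eqP xy; rewrite {1}xy.
split => //; apply: le_anti.
have := vgeB (vge_val x) (vgt_vge vy); rewrite /vge (negbTE xy0) /= => ->.
rewrite andbT leNgt_og; apply: contra not_vgt_x => lt_x_xy.
by rewrite -{1}[x](subrK y) vgtD // /vgt lt_x_xy orbT.
Qed.

Lemma inO_sign k : inO v ((-1) ^+ k).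
Proof.
elim: k => [|k IH]; first by rewrite expr0; apply: inO1.
by rewrite exprS; apply: inOM IH; apply: vgeN inO1.
Qed.

Lemma inO_det k (A : 'M[K]_k) : (forall i j, inO v (A i j)) -> inO v (\det A).
Proof.
move=> OA; apply: vge_sum => s _; apply: inOM (inO_sign _) _.
by elim/big_rec: _ => [|i x _ Ox]; [apply: inO1 | apply: inOM].
Qed.

Lemma inO_invmx k (A : 'M[K]_k) :
  (forall i j, inO v (A i j)) -> inOunit v (\det A) -> forall i j, inO v (invmx A i j).
Proof.
move=> OA /andP[det0 /eqP vdet] i j.
rewrite /invmx unitmxE unitfE det0 !mxE /cofactor; apply: inOM.
  by rewrite /inO /vge vV // vdet oppr0 lexx orbT.
by apply: inOM (inO_sign _) (inO_det _) => a b; rewrite !mxE.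
Qed.

Lemma vgt_intertwine_diag d (Om A B : 'M[K]_d) g :
    Om *m A = B^T *m Om -> (forall i j, i != j -> inm v (Om i j)) ->
    vge_mx v A g -> vge_mx v B g ->
  forall p q, vgt (Om p p * A p q - B q p * Om q q) g.
Proof.
move=> OmAB Om_off Ag Bg p q.
have /matrixP/(_ p q) := OmAB; rewrite !mxE (bigD1 p) // [RHS](bigD1 q) //= mxE => sumE.
have -> : Om p p * A p q - B q p * Om q q =
    \sum_(k | k != q) B^T p k * Om k q - \sum_(k | k != p) Om p k * A k q.
  by rewrite -[Om p p * A p q](addrK (\sum_(k | k != p) Om p k * A k q)) sumE; ring.
rewrite -[g](add0r g); apply: vgtB; apply: vgt_sum => k nek.
  by rewrite mxE mulrC; apply: vgtM (Om_off _ _ nek) (Bg k p).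
by apply: vgtM (Om_off _ _ _) (Ag k q); rewrite eq_sym.
Qed.

Hypothesis hF : residue_formally_real v.

Lemma sum_sqr_unit k (z : 'I_k -> K) i0 : (forall i, inO v (z i)) -> z i0 = 1 ->
  \sum_i z i ^+ 2 != 0 /\ v (\sum_i z i ^+ 2) = 0.
Proof.
move=> Oz z1; apply: inO_notm.
  by apply: vge_sum => i _; rewrite expr2; apply: inOM.
have -> : \sum_i z i ^+ 2 = 1 + \sum_i (if i == i0 then 0 else z i) ^+ 2.
  rewrite (bigD1 i0) //= z1 expr1n [X in 1 + X](bigD1 i0) //= eqxx expr2 mul0r add0r.
  by congr (_ + _); apply: eq_bigr => i /negbTE->.
by apply: hF => i; case: eqP => _; [apply: vge0 | apply: Oz].
Qed.

Lemma v_sum_sqr k (y : 'I_k -> K) i0 :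
    y i0 != 0 -> (forall i, vge v (y i) (v (y i0))) ->
  \sum_i y i ^+ 2 != 0 /\ v (\sum_i y i ^+ 2) = v (y i0) + v (y i0).
Proof.
move=> y0 min_y; pose z i := y i / y i0.
have Oz i : inO v (z i).
  by rewrite /inO -(subrr (v (y i0))) -vV //; apply: vgeM (min_y i) (vge_val _).
have [s0 vs] := sum_sqr_unit Oz (divff y0).
have sE : \sum_i y i ^+ 2 = y i0 ^+ 2 * \sum_i z i ^+ 2.
  by rewrite mulr_sumr; apply: eq_bigr => i _; rewrite /z; field.
have y2 : y i0 ^+ 2 != 0 by rewrite expf_neq0.
by rewrite sE mulf_neq0 // vM // vs addr0 expr2 vM.
Qed.

(** * The Schur relation *)

Variables (H : falgType K) (tau : H -> K) (star : H -> H).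
Hypotheses (htau : symm_trace_form tau) (hstar : involutive_antiaut star).
Variables (L : finType) (n : L -> nat) (r : forall l : L, H -> 'M[K]_(n l)) (c : L -> K).
Hypotheses (hr : split_semisimple r) (hc : schur_elements r tau c).
Variables (l : L) (d : nat) (rho : H -> 'M[K]_d).
Hypothesis hrho : irr_rep_of_type r l rho.

Lemma tau_lincomb (I : Type) (s : seq I) (a : I -> K) (x : I -> H) :
  tau (\sum_(i <- s) a i *: x i) = \sum_(i <- s) a i * tau (x i).
Proof. by case: htau => tau_lin _ _; apply: (lincomb_morph (W := K^o)). Qed.

Lemma star_lincomb (I : Type) (s : seq I) (a : I -> K) (x : I -> H) :
  star (\sum_(i <- s) a i *: x i) = \sum_(i <- s) a i *: star (x i).
Proof. by case: hstar => star_lin _ _; apply: lincomb_morph. Qed.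

Lemma rho_lincomb (I : Type) (s : seq I) (a : I -> K) (x : I -> H) :
  rho (\sum_(i <- s) a i *: x i) = \sum_(i <- s) a i *: rho (x i).
Proof. by case: hrho => -[rho_lin _ _] _; apply: lincomb_morph. Qed.

Lemma star_sym_basis_expand (X : seq H) : star_sym_basis tau star X ->
  forall x : H, x = \sum_(i < size X) tau (x * star X`_i) *: X`_i.
Proof.
case=> X_basis _ X_dual x; have X_uniq := free_uniq (basis_free X_basis).
have xE : x = \sum_(i < size X) coord (in_tuple X) i x *: X`_i.
  by apply: (coord_span (X := in_tuple X)); rewrite (span_basis X_basis) memvf.
rewrite {1}xE; apply: eq_bigr => j _; congr (_ *: _).
rewrite {2}xE mulr_suml (eq_bigr (fun i => coord (in_tuple X) i x *: (X`_i * star X`_j)));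
  last by move=> i _; rewrite scalerAl.
rewrite tau_lincomb (bigD1 j) //= big1 => [|i neij].
  by rewrite X_dual ?mem_nth // eqxx mulr1 addr0.
by rewrite X_dual ?mem_nth // nth_uniq // -[_ == _ :> nat]/(i == j) (negbTE neij) mulr0.
Qed.

Lemma schur_neq0 : c l != 0. Proof. by case: hc. Qed.

Lemma schur_relation (X : seq H) (M : 'M[K]_d) : star_sym_basis tau star X ->
  c l *: M = \sum_(i < size X) \tr (M *m rho (star X`_i)) *: rho X`_i.
Proof.
move=> hX; case: hrho => _ [P [Q [PQ _ rhoE]]]; case: hr => _ r_rep _ r_onto.
(* e vanishes on every simple module but the l-th, so tau(e y) only sees chi_l *)
have [e re] := r_onto (@dfwith L (fun l' => 'M[K]_(n l')) (fun _ => 0) l (Q *m M *m P)).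
have rho_e : rho e = M.
  by rewrite rhoE re dfwith_in !mulmxA PQ mul1mx -mulmxA PQ mulmx1.
have tau_e (y : H) : tau (e * y) = (c l)^-1 * \tr (M *m rho y).
  case: hc => _ ->; rewrite (bigD1 l) //= big1 ?addr0 => [|l' nel'].
    rewrite /chi; case: (r_rep l) => _ -> _.
    rewrite re dfwith_in rhoE !mulmxA; congr (_ * _).
    by rewrite [RHS]mxtrace_mulC !mulmxA.
  rewrite /chi; case: (r_rep l') => _ -> _.
  by rewrite re dfwith_out 1?eq_sym // mul0mx linear0 mulr0.
rewrite -{1}rho_e {1}(star_sym_basis_expand hX e) rho_lincomb scaler_sumr.
by apply: eq_bigr => i _; rewrite tau_e scalerA mulrA mulfV ?schur_neq0 // mul1r.
Qed.

Lemma schur_entry (X : seq H) p q : star_sym_basis tau star X ->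
  c l = \sum_(i < size X) rho (star X`_i) q p * rho X`_i p q.
Proof.
move=> hX; have /matrixP/(_ p q) := schur_relation (delta_mx p q) hX.
rewrite !mxE !eqxx mulr1 summxE => ->; apply: eq_bigr => i _.
by rewrite mxE mxtrace_delta_mul.
Qed.

Lemma intertwine_basis_ext (X : seq H) (Om : 'M[K]_d) : star_sym_basis tau star X ->
    (forall x : H, x \in X -> Om *m rho x = (rho (star x))^T *m Om) ->
  forall x : H, Om *m rho x = (rho (star x))^T *m Om.
Proof.
move=> hX OmX x; rewrite (star_sym_basis_expand hX x) star_lincomb !rho_lincomb.
rewrite mulmx_sumr linear_sum mulmx_suml; apply: eq_bigr => i _.
by rewrite -scalemxAr OmX ?mem_nth // linearZ /= -scalemxAl.
Qed.

(** * Valuations of representing matrices *)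

Definition entries_ge (X : seq H) g := forall b, b \in X -> vge_mx v (rho b) g.

Lemma dim_gt0 : (0 < d)%N.
Proof.
case: hrho => _ [P [Q [_ QP _]]]; case: hr => n_gt0 _ _ _.
move: P Q QP; case: d => // P Q /matrixP/(_ (Ordinal (n_gt0 l)) (Ordinal (n_gt0 l))).
by rewrite flatmx0 mulmx0 !mxE eqxx => /esym/eqP; rewrite oner_eq0.
Qed.

Lemma star_sym_basis_star (X : seq H) (b : H) :
  star_sym_basis tau star X -> b \in X -> star b \in X.
Proof. by case=> _ ->. Qed.

Lemma exists_min_entry (X : seq H) : star_sym_basis tau star X ->
  exists (i : 'I_(size X)) p q, rho X`_i p q != 0 /\ entries_ge X (v (rho X`_i p q)).
Proof.
move=> hX; pose e (t : 'I_(size X) * 'I_d * 'I_d) : K := rho X`_t.1.1 t.1.2 t.2.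
have [t0 nz_t0] : exists t, e t != 0.
  apply/existsP; rewrite -negb_forall; apply: contra schur_neq0 => /forallP e0.
  pose p := Ordinal dim_gt0; rewrite (schur_entry p p hX) big1 // => i _.
  by have := e0 (i, p, p); rewrite /e /= => /eqP->; rewrite mulr0.
set s := [seq v (e t) | t <- enum [pred t | e t != 0]].
have s_t0 : v (e t0) \in s by apply: map_f; rewrite mem_enum.
have [_ /mapP[[[i p] q] + ->] min_s] := seq_min_og s_t0.
rewrite mem_enum inE => nz; exists i, p, q; split=> // b Xb p' q'.
have [->|nz'] := eqVneq (rho b p' q') 0; first exact: vge0.
rewrite /vge (negbTE nz') /=; apply: min_s; apply/mapP.
have ib : (index b X < size X)%N by rewrite index_mem.
exists (Ordinal ib, p', q'); last by rewrite /e /= nth_index.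
by rewrite mem_enum inE /e /= nth_index.
Qed.

Lemma double_le_v_schur (X : seq H) m :
  star_sym_basis tau star X -> entries_ge X m -> m + m <= v (c l).
Proof.
move=> hX Xm; pose p := Ordinal dim_gt0.
have : vge v (c l) (m + m).
  rewrite (schur_entry p p hX); apply: vge_sum => i _.
  by apply: vgeM; apply: Xm; rewrite ?star_sym_basis_star ?mem_nth.
by rewrite /vge (negbTE schur_neq0).
Qed.

Lemma v_schur_double (X : seq H) : star_sym_basis tau star X ->
    (forall (i : 'I_(size X)) p q, rho X`_i p q != 0 -> entries_ge X (v (rho X`_i p q)) ->
       v (c l) <= v (rho X`_i p q) + v (rho X`_i p q)) ->
  exists m, v (c l) = m + m /\ entries_ge X m.
Proof.
move=> hX vc_le; have [i [p [q [nz Xm]]]] := exists_min_entry hX.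
exists (v (rho X`_i p q)); split=> //.
by apply: le_anti; rewrite vc_le // (double_le_v_schur hX Xm).
Qed.

Lemma balanced_of_v_schur_double (B : seq H) : star_sym_basis tau star B ->
    (forall X, star_sym_basis tau star X -> exists m, v (c l) = m + m /\ entries_ge X m) ->
  balanced v tau star (c l) rho.
Proof.
move=> hB halves; have [m [vc _]] := halves B hB.
exists (- m); split; first by rewrite mulr2n -opprD opprK.
move=> X hX b Xb; have [m' [vc' Xm']] := halves X hX.
by rewrite opprK -(double_inj_og (etrans (esym vc') vc)); apply: Xm'.
Qed.

Lemma v_schur_le_of_diag_intertwiner (Om : 'M[K]_d) (X : seq H) :
    (forall x : H, Om *m rho x = (rho (star x))^T *m Om) ->
    (forall i j, i != j -> inm v (Om i j)) -> (forall i, inOunit v (Om i i)) ->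
    star_sym_basis tau star X ->
  forall (i : 'I_(size X)) p q, rho X`_i p q != 0 -> entries_ge X (v (rho X`_i p q)) ->
  v (c l) <= v (rho X`_i p q) + v (rho X`_i p q).
Proof.
move=> OmE Om_off Om_diag hX i0 p q nz Xm; set m := v (rho X`_i0 p q) in Xm *.
have X_entry (i : 'I_(size X)) : vge_mx v (rho X`_i) m by apply: Xm; rewrite mem_nth.
have X_star_entry (i : 'I_(size X)) : vge_mx v (rho (star X`_i)) m.
  by apply: Xm; rewrite star_sym_basis_star ?mem_nth.
pose y (i : 'I_(size X)) : K := rho X`_i p q.
have [S_nz vS] := v_sum_sqr (y := y) nz (fun i => X_entry i p q).
pose D i := Om p p * y i - rho (star X`_i) q p * Om q q.
have D_gt i : vgt (D i) m :=
  vgt_intertwine_diag (OmE _) Om_off (X_entry i) (X_star_entry i) p q.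
have cE : c l * Om q q = Om p p * \sum_i y i ^+ 2 - \sum_i D i * y i.
  rewrite (schur_entry p q hX) mulr_suml mulr_sumr -sumrB.
  by apply: eq_bigr => i _; rewrite /D /y; ring.
case/andP: (Om_diag p) => pp_nz /eqP v_pp; case/andP: (Om_diag q) => qq_nz /eqP v_qq.
have E_gt : vgt (\sum_i D i * y i) (v (Om p p * \sum_i y i ^+ 2)).
  by rewrite vM // v_pp vS add0r; apply: vgt_sum => i _; apply: vgtM (D_gt i) (X_entry i p q).
have [_] := vB_gt (mulf_neq0 pp_nz S_nz) E_gt.
by rewrite -cE vM ?schur_neq0 // v_qq addr0 vM // v_pp vS add0r => ->.
Qed.

Lemma v_schur_le_of_sym_intertwiner (Om : 'M[K]_d) (X : seq H) :
    (forall x : H, Om *m rho x = (rho (star x))^T *m Om) -> Om^T = Om ->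
    (forall i j, inO v (Om i j)) -> inOunit v (\det Om) ->
    star_sym_basis tau star X ->
  forall (i : 'I_(size X)) p q, rho X`_i p q != 0 -> entries_ge X (v (rho X`_i p q)) ->
  v (c l) <= v (rho X`_i p q) + v (rho X`_i p q).
Proof.
move=> OmE Om_sym OmO Om_unit hX i0 p q nz Xm.
have Om_inv : Om \in unitmx by rewrite unitmxE unitfE; case/andP: Om_unit.
have rho_star (x : H) : rho (star x) = invmx Om *m (rho x)^T *m Om.
  have := congr1 trmx (OmE x); rewrite !trmx_mul trmxK Om_sym => rhoE.
  by rewrite -mulmxA rhoE mulKmx.
have trE (i : 'I_(size X)) :
    \tr (invmx Om *m delta_mx p q *m Om *m rho (star X`_i)) = rho X`_i p q.
  rewrite rho_star !mulmxA -[_ *m Om *m invmx Om]mulmxA mulmxV // mulmx1.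
  by rewrite -!mulmxA mxtrace_mulC -!mulmxA mulmxV // mulmx1 mxtrace_delta_mul mxE.
have cE : c l * (invmx Om p p * Om q q) = \sum_(i < size X) rho X`_i p q ^+ 2.
  have /matrixP/(_ p q) := schur_relation (invmx Om *m delta_mx p q *m Om) hX.
  rewrite mxE mulmx_delta_entry summxE => ->.
  by apply: eq_bigr => i _; rewrite mxE trE expr2.
have [S_nz vS] := v_sum_sqr (y := fun i : 'I_(size X) => rho X`_i p q) nz
  (fun i => Xm _ (mem_nth 0 (ltn_ord i)) p q).
rewrite -cE in S_nz vS; move: S_nz; rewrite mulf_eq0 negb_or => /andP[c_nz w_nz].
rewrite -vS vM // -{1}[v (c l)]addr0; apply: leD_og (lexx _) _.
have := inOM (inO_invmx OmO Om_unit p p) (OmO q q).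
by rewrite /inO /vge (negbTE w_nz).
Qed.

Variables (B : seq H) (hB : star_sym_basis tau star B).

Lemma balanced_of_diag_intertwiner (Om : 'M[K]_d) :
    (forall i j, i != j -> inm v (Om i j)) -> (forall i, inOunit v (Om i i)) ->
    (forall x : H, x \in B -> Om *m rho x = (rho (star x))^T *m Om) ->
  balanced v tau star (c l) rho.
Proof.
move=> Om_off Om_diag OmB; have OmE := intertwine_basis_ext hB OmB.
apply: balanced_of_v_schur_double hB _ => X hX.
exact: v_schur_double hX (v_schur_le_of_diag_intertwiner OmE Om_off Om_diag hX).
Qed.

Lemma residue_symmetry_of_diag_intertwiner (Om : 'M[K]_d) :
    (forall i j, i != j -> inm v (Om i j)) -> (forall i, inOunit v (Om i i)) ->
    (forall x : H, x \in B -> Om *m rho x = (rho (star x))^T *m Om) ->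
  forall (a : G) (w : K), v (c l) = - (a *+ 2) -> w != 0 -> v w = a ->
  forall x : H, x \in B -> forall s t : 'I_d,
  inm v (Om t t * (w * rho (star x) t s) - Om s s * (w * rho x s t)).
Proof.
move=> Om_off Om_diag OmB a w va w_nz vw x Bx s t.
have OmE := intertwine_basis_ext hB OmB.
have [m [vc Bm]] := v_schur_double hB (v_schur_le_of_diag_intertwiner OmE Om_off Om_diag hB).
have am : a = - m by apply: double_inj_og; rewrite -opprD -vc va opprK mulr2n.
have w_ge : vge v w (- m) by rewrite /vge (negbTE w_nz) vw am lexx orbT.
have D_gt :=
  vgt_intertwine_diag (OmE x) Om_off (Bm x Bx) (Bm _ (star_sym_basis_star hB Bx)) s t.
rewrite (_ : _ - _ = - ((Om s s * rho x s t - rho (star x) t s * Om t t) * w)); last by ring.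
by apply: vgtN; rewrite -(subrr m); apply: vgtM D_gt w_ge.
Qed.

Lemma balanced_of_sym_intertwiner (Om : 'M[K]_d) :
    Om^T = Om -> (forall i j, inO v (Om i j)) -> inOunit v (\det Om) ->
    (forall x : H, x \in B -> Om *m rho x = (rho (star x))^T *m Om) ->
  balanced v tau star (c l) rho.
Proof.
move=> Om_sym OmO Om_unit OmB; have OmE := intertwine_basis_ext hB OmB.
apply: balanced_of_v_schur_double hB _ => X hX.
exact: v_schur_double hX (v_schur_le_of_sym_intertwiner OmE Om_sym OmO Om_unit hX).
Qed.

End Balanced.

Theorem mainTheorem4
  (K : fieldType) (G : porderZmodType) (v : K -> G)
  (hG : totally_ordered_group G) (hv : surj_valuation v)
  (hF : residue_formally_real v)
  (H : falgType K) (tau : H -> K) (htau : symm_trace_form tau)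
  (star : H -> H) (hstar : involutive_antiaut star)
  (L : finType) (n : L -> nat) (r : forall l : L, H -> 'M[K]_(n l))
  (hr : split_semisimple r)
  (c : L -> K) (hc : schur_elements r tau c)
  (B : seq H) (hB : star_sym_basis tau star B)
  (l : L) (d : nat) (rho : H -> 'M[K]_d) (hrho : irr_rep_of_type r l rho) :
  (* (a) *)
  (forall Om : 'M[K]_d,
     (forall i j, inO v (Om i j)) ->
     (forall i j, i != j -> inm v (Om i j)) ->
     (forall i, inOunit v (Om i i)) ->
     (forall x, x \in B -> Om *m rho x = (rho (star x))^T *m Om) ->
     balanced v tau star (c l) rho /\
     (forall (a : G) (w : K), v (c l) = - (a *+ 2) -> w != 0 -> v w = a ->
        forall x, x \in B -> forall s t : 'I_d,
          inm v (Om t t * (w * rho (star x) t s) - Om s s * (w * rho x s t))))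
  /\
  (* (b) *)
  (forall Om : 'M[K]_d,
     Om^T = Om ->
     (forall i j, inO v (Om i j)) ->
     inOunit v (\det Om) ->
     (forall x, x \in B -> Om *m rho x = (rho (star x))^T *m Om) ->
     balanced v tau star (c l) rho).
Proof.
split=> [Om _ Om_off Om_diag OmB | Om Om_sym OmO Om_unit OmB].
  split=> [|a w va w_nz vw x Bx].
    exact (balanced_of_diag_intertwiner hG hv hF htau hstar hr hc hrho hB
      Om_off Om_diag OmB).
  exact (residue_symmetry_of_diag_intertwiner hG hv hF htau hstar hr hc hrho hB
    Om_off Om_diag OmB va w_nz vw Bx).
exact (balanced_of_sym_intertwiner hG hv hF htau hstar hr hc hrho hB
  Om_sym OmO Om_unit OmB).
Qed.
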